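(* Let $p,q,s,t$ be non-negative integers with $t\le s\le p+q$. Then \[ \binom{p+q+t}{s}\binom{s}{t}=\sum_{\substack{a+c=s,\ n+r=t\\ 0\le n\le a,\ 0\le r\le c}}\binom{p+n}{a}\binom{a}{n}\binom{q+r}{c}\binom{c}{r}\;-\;\sum_{\substack{a+c=s-1,\ n+r=t-1\\ 0\le n\le a,\ 0\le r\le c}}\binom{p+n}{a}\binom{a}{n}\binom{q+r}{c}\binom{c}{r}, \] where all summation indices are non-negative integers. *)

From mathcomp Require Import all_boot all_order all_algebra.
Set Implicit Arguments. Unset Strict Implicit. Unset Printing Implicit Defensive.
Import GRing.Theory Num.Theory.

Definition term (p q a c n r : nat) : nat :=
  'C(p + n, a) * 'C(a, n) * 'C(q + r, c) * 'C(c, r).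

Definition Ssum (p q S T : nat) : nat :=
  \sum_(a < S.+1) \sum_(c < S.+1) \sum_(n < T.+1) \sum_(r < T.+1)
    (if [&& a + c == S, n + r == T, n <= a & r <= c]
     then term p q a c n r else 0).

(* Sum over a+c = s-1, n+r = t-1 (as integers: empty when s = 0 or t = 0),
   i.e. a+c+1 = s, n+r+1 = t. *)
Definition Ssum_pred (p q s t : nat) : nat :=
  \sum_(a < s.+1) \sum_(c < s.+1) \sum_(n < t.+1) \sum_(r < t.+1)
    (if [&& a + c + 1 == s, n + r + 1 == t, n <= a & r <= c]
     then term p q a c n r else 0).

From mathcomp Require Import all_boot all_order all_algebra zify ring.
Import GRing.Theory Num.Theory.

(* For T <= S we show
       Ssum p q S T = 'C(p + q, S - T) * 'C(p + q + T + 1, T).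
   The constraints a + c = S, n + r = T eliminate c and r, leaving a double
   sum over a and n.  Writing a = n + i and using the "subset of a subset"
   identity 'C(x + k, i + k) 'C(i + k, k) = 'C(x + k, k) 'C(x, i) twice, the
   sum over i becomes a Vandermonde convolution equal to 'C(p + q, S - T),
   and the remaining sum over n is the convolution
   \sum_n 'C(p + n, n) 'C(q + T - n, T - n) = 'C(p + q + T + 1, T).
   The second sum of the proposition is Ssum p q (s - 1) (t - 1) (or 0 when
   t = 0), so the proposition reduces to an identity between products of
   binomials, which follows from the nested-subset identity and Pascal's rule. *)

(* Choosing an (i+k)-subset and then a k-subset of it is the same as choosing
   the k-subset first and then i more elements. *)
Lemma bin_nested x k i : 'C(x + k, i + k) * 'C(i + k, k) = 'C(x + k, k) * 'C(x, i).
Proof.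
case: (leqP i x) => hix; last first.
  by rewrite (bin_small hix) muln0 bin_small ?muln0 ?mul0n // ltn_add2r.
apply/eqP; rewrite -(@eqn_pmul2r (k`! * i`! * (x - i)`!)); last first.
  by rewrite !muln_gt0 !fact_gt0.
have fact_ik : 'C(i + k, k) * (k`! * i`!) = (i + k)`!.
  by rewrite -(bin_fact (leq_addl i k)) addnK.
have fact_xk_ik : 'C(x + k, i + k) * ((i + k)`! * (x - i)`!) = (x + k)`!.
  by rewrite -(bin_fact (_ : i + k <= x + k)) ?leq_add2r // subnDr.
have fact_x : 'C(x, i) * (i`! * (x - i)`!) = x`! by rewrite bin_fact.
have fact_xk : 'C(x + k, k) * (k`! * x`!) = (x + k)`!.
  by rewrite -(bin_fact (leq_addl x k)) addnK.
apply/eqP.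
transitivity ('C(x + k, i + k) * ('C(i + k, k) * (k`! * i`!)) * (x - i)`!); first ring.
by rewrite fact_ik -mulnA fact_xk_ik -fact_xk -fact_x; ring.
Qed.

Definition binconv (p q T : nat) : nat :=
  \sum_(n < T.+1) 'C(p + n, n) * 'C(q + (T - n), T - n).

Lemma hockey_stick p T : \sum_(n < T.+1) 'C(p + n, n) = 'C(p + T.+1, T).
Proof.
elim: T => [|T IH]; first by rewrite big_ord_recr big_ord0 !bin0.
by rewrite big_ord_recr /= IH (addnS _ T.+1) binS addnC addnS.
Qed.

(* Pascal's rule applied termwise gives a recurrence in q and T. *)
Lemma binconvS p q T : binconv p q.+1 T.+1 = binconv p q T.+1 + binconv p q.+1 T.
Proof.
rewrite /binconv big_ord_recr /= subnn !addn0 !bin0.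
rewrite [X in _ = X + _]big_ord_recr /= subnn addn0 !bin0 addnAC.
congr (_ + _); rewrite -big_split /=; apply: eq_bigr => n _.
have hn : (n <= T)%N by rewrite -ltnS.
by rewrite -mulnDr subSn // !addnS binS.
Qed.

Lemma binconvE p q T : binconv p q T = 'C(p + q + T.+1, T).
Proof.
elim: q T => [|q IHq] T.
  rewrite addn0 /binconv -hockey_stick.
  by apply: eq_bigr => n _; rewrite add0n binn muln1.
elim: T => [|T IHT]; first by rewrite /binconv big_ord_recr big_ord0 /= !bin0.
rewrite binconvS IHT IHq.
have -> : p + q.+1 + T.+2 = (p + q + T.+2).+1 by lia.
by rewrite binS; congr (_ + 'C(_, _)); lia.
Qed.

Lemma sum_if_const I (r : seq I) (P : pred I) (b : bool) (f : I -> nat) :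
  \sum_(i <- r | P i) (if b then f i else 0) = if b then \sum_(i <- r | P i) f i else 0.
Proof. by case: b => //; rewrite big1. Qed.

Lemma sum_solve_eq (m S a : nat) (g : nat -> nat) : (S - a < m)%N ->
  \sum_(c < m) (if a + c == S then g c else 0) = if (a <= S)%N then g (S - a) else 0.
Proof.
move=> hm; case: (leqP a S) => haS.
  rewrite (bigD1 (Ordinal hm)) //= subnKC // eqxx big1 ?addn0 // => c hc.
  case: eqP => // e; move: hc; case/negP; apply/eqP/val_inj => /=; lia.
by rewrite big1 // => c _; case: eqP => // e; lia.
Qed.

Lemma sum_ord_le m S (h : nat -> nat) : (S < m)%N ->
  \sum_(a < m) (if (a <= S)%N then h a else 0) = \sum_(a < S.+1) h a.
Proof.
move=> hm; rewrite -(subnKC hm) big_split_ord /= [X in _ + X]big1 ?addn0.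
  by apply: eq_bigr => a _; rewrite /= -ltnS ltn_ord.
by move=> a _ /=; case: ifP => //; lia.
Qed.

(* The side conditions n <= a and r <= c are automatic: the summand vanishes
   otherwise. *)
Lemma term_vanish p q a c n r : (a < n) || (c < r) -> term p q a c n r = 0.
Proof.
by case/orP => h; rewrite /term ?(bin_small h) ?muln0 ?mul0n.
Qed.

Lemma quadruple_sum_elim p q m1 m2 S T : (S < m1)%N -> (T < m2)%N ->
  \sum_(a < m1) \sum_(c < m1) \sum_(n < m2) \sum_(r < m2)
    (if [&& a + c == S, n + r == T, n <= a & r <= c] then term p q a c n r else 0)
  = \sum_(a < S.+1) \sum_(n < T.+1) term p q a (S - a) n (T - n).
Proof.
move=> h1 h2.
rewrite -(@sum_ord_le m1 S
  (fun a => \sum_(n < T.+1) term p q a (S - a) n (T - n)) h1).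
apply: eq_bigr => a _; rewrite exchange_big /=.
rewrite -(@sum_ord_le m2 T (fun n => term p q a (S - a) n (T - n)) h2).
rewrite -sum_if_const.
apply: eq_bigr => n _.
have drop_le : forall c r : nat,
  (if [&& a + c == S, n + r == T, n <= a & r <= c] then term p q a c n r else 0)
  = if a + c == S then (if n + r == T then term p q a c n r else 0) else 0.
  move=> c r; case: (a + c == S); case: (n + r == T) => //=.
  case: (leqP n a) => hn; case: (leqP r c) => hr //=;
    by rewrite term_vanish // ?hn ?hr ?orbT.
under eq_bigr => c _ do under eq_bigr => r _ do rewrite drop_le.
under eq_bigr => c _ do rewrite sum_if_const.
rewrite (@sum_solve_eq m1 S a
  (fun c => \sum_(r < m2) (if n + r == T then term p q a c n r else 0))); last lia.
case: (leqP a S) => // _.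
by rewrite (@sum_solve_eq m2 T n (fun r => term p q a (S - a) n r)) //; lia.
Qed.

(* For fixed n, the sum over a is a Vandermonde convolution: only
   a = n + i with i <= S - T contributes. *)
Lemma sum_over_a p q S T n : (n <= T)%N -> (T <= S)%N ->
  \sum_(a < S.+1) term p q a (S - a) n (T - n)
  = 'C(p + q, S - T) * ('C(p + n, n) * 'C(q + (T - n), T - n)).
Proof.
move=> hn hT.
rewrite -(big_mkord xpredT (fun a => term p q a (S - a) n (T - n))).
rewrite (@big_cat_nat _ _ _ n) //=; last lia.
rewrite [X in X + _]big1_seq ?add0n; last first.
  move=> a /andP[_]; rewrite mem_index_iota => /andP[_ ha].
  by rewrite term_vanish ?ha.
rewrite -{1}(add0n n) big_addn (@big_cat_nat _ _ _ (S - T).+1) //=; last lia.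
rewrite [X in _ + X]big1_seq ?addn0; last first.
  move=> i /andP[_]; rewrite mem_index_iota => /andP[hi hi2].
  by rewrite term_vanish //; apply/orP; right; lia.
rewrite big_mkord -binomial.Vandermonde big_distrl /=; apply: eq_bigr => i _.
have hi : (i <= S - T)%N by rewrite -ltnS.
have -> : S - (i + n) = (S - T - i) + (T - n) by lia.
rewrite /term bin_nested -(mulnA _ 'C(q + (T - n), _)) bin_nested.
ring.
Qed.

Lemma SsumE p q S T : (T <= S)%N ->
  Ssum p q S T = 'C(p + q, S - T) * 'C(p + q + T.+1, T).
Proof.
move=> hT; rewrite /Ssum quadruple_sum_elim // -binconvE /binconv.
rewrite exchange_big big_distrr /=; apply: eq_bigr => n _.
by apply: sum_over_a hT; rewrite -ltnS ltn_ord.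
Qed.

Lemma Ssum_pred0 p q s : Ssum_pred p q s 0 = 0.
Proof.
rewrite /Ssum_pred; apply: big1 => a _; apply: big1 => c _.
by apply: big1 => n _; apply: big1 => r _; rewrite !addn1 /= andbF.
Qed.

Lemma Ssum_predSS p q s t : Ssum_pred p q s.+1 t.+1 = Ssum p q s t.
Proof.
rewrite /Ssum quadruple_sum_elim // -(@quadruple_sum_elim p q s.+2 t.+2) //.
rewrite /Ssum_pred; apply: eq_bigr => a _; apply: eq_bigr => c _.
by apply: eq_bigr => n _; apply: eq_bigr => r _; rewrite !addn1 !eqSS.
Qed.

(* The identity between closed forms that remains after evaluating both sums:
   with N = m + t + 1, the nested-subset identity turns the left factor into
   'C(N, s + 1) 'C(s + 1, t + 1) and Pascal's rule splits 'C(N + 1, t + 1). *)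
Lemma closed_form_step m s t : (t <= s)%N ->
  'C(m, s - t) * 'C(m + t.+2, t.+1)
  = 'C(m + t.+1, s.+1) * 'C(s.+1, t.+1) + 'C(m, s - t) * 'C(m + t.+1, t).
Proof.
move=> hts.
have -> : s.+1 = s - t + t.+1 by lia.
rewrite bin_nested.
have -> : m + t.+2 = (m + t.+1).+1 by lia.
by rewrite binS mulnDr [_ * 'C(m + t.+1, t.+1)]mulnC.
Qed.

Local Open Scope ring_scope.

Theorem proposition4p1 (p q s t : nat) (hts : (t <= s)%N) (hs : (s <= p + q)%N) :
  (('C(p + q + t, s) * 'C(s, t))%N%:Z : int)
  = (Ssum p q s t)%:Z - (Ssum_pred p q s t)%:Z.
Proof.
case: t hts => [|t] hts.
  by rewrite Ssum_pred0 SsumE // subr0 subn0 addn0 !bin0 !muln1.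
case: s hts hs => [|s] // hts _.
rewrite Ssum_predSS !SsumE // subSS closed_form_step //.
by rewrite PoszD addrK.
Qed.
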